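(* Let $(M,d)$ be a complete pointed metric space, $k\in\mathbb N$ and $\lambda_1,\dots,\lambda_k\in\mathbb R$. Then the set $\sum_{i=1}^k\lambda_i\delta(M):=\{\sum_{i=1}^k\lambda_i\delta(x_i):x_1,\dots,x_k\in M\}$ is a norm-closed subset of $\mathcal F(M)$.
   Context: A pointed metric space is a metric space with a distinguished point $0$. $\mathrm{Lip}_0(M)$ denotes the real-valued Lipschitz functions on $M$ vanishing at $0$, normed by the Lipschitz constant. $\delta:M\to\mathrm{Lip}_0(M)^*$, $\delta(x)(\varphi)=\varphi(x)$; the Lipschitz-free space $\mathcal F(M)$ is the norm-closed linear span of $\delta(M)$ in $\mathrm{Lip}_0(M)^*$. *)

From mathcomp Require Import all_boot all_order all_algebra.
From mathcomp Require Import reals.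
Set Implicit Arguments. Unset Strict Implicit. Unset Printing Implicit Defensive.
Import Order.TTheory GRing.Theory Num.Theory.
Local Open Scope ring_scope.

Section LipFree.
Variables (R : realType) (M : Type) (d : M -> M -> R) (z : M).

Definition is_metric : Prop :=
  [/\ (forall x y, 0 <= d x y),
      (forall x y, d x y = 0 <-> x = y),
      (forall x y, d x y = d y x) &
      (forall x y w, d x w <= d x y + d y w)].

Definition metric_complete : Prop :=
  forall u : nat -> M,
    (forall e : R, 0 < e -> exists N, forall m n, (N <= m)%N -> (N <= n)%N -> d (u m) (u n) < e) ->
    exists x, forall e : R, 0 < e -> exists N, forall n, (N <= n)%N -> d (u n) x < e.

Definition Lip0 (f : M -> R) : Prop :=
  f z = 0 /\ exists C : R, forall x y, `|f x - f y| <= C * d x y.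

Definition Lip0_ball (f : M -> R) : Prop :=
  f z = 0 /\ forall x y, `|f x - f y| <= d x y.

(* functionals on Lip_0(M) (only their values on Lip_0(M) matter) *)
Definition functional := (M -> R) -> R.

Definition in_dual (Phi : functional) : Prop :=
  (forall (a b : R) f g, Lip0 f -> Lip0 g ->
      Phi (fun x => a * f x + b * g x) = a * Phi f + b * Phi g) /\
  exists C : R, forall f, Lip0_ball f -> `|Phi f| <= C.

Definition dual_dist_le (Phi Psi : functional) (e : R) : Prop :=
  forall f, Lip0_ball f -> `|Phi f - Psi f| <= e.

Definition delta (x : M) : functional := fun f => f x.

Definition delta_comb (n : nat) (a : 'I_n -> R) (y : 'I_n -> M) : functional :=
  fun f => \sum_(i < n) a i * f (y i).

Definition in_free_space (Phi : functional) : Prop :=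
  in_dual Phi /\
  forall e : R, 0 < e -> exists (n : nat) (a : 'I_n -> R) (y : 'I_n -> M),
      dual_dist_le Phi (delta_comb a y) e.

(* the set sum_{i=1}^k lambda_i delta(M) -- equality as elements of the dual *)
Definition sum_delta_set (k : nat) (lam : 'I_k -> R) (Phi : functional) : Prop :=
  exists xs : 'I_k -> M, forall f, Lip0 f -> Phi f = delta_comb lam xs f.

Definition norm_closed_subset_of_F (S : functional -> Prop) : Prop :=
  (forall Phi, S Phi -> in_free_space Phi) /\
  (forall (u : nat -> functional) (Phi : functional),
      (forall n, S (u n)) -> in_free_space Phi ->
      (forall e : R, 0 < e -> exists N, forall n, (N <= n)%N -> dual_dist_le (u n) Phi e) ->
      S Phi).

End LipFree.

From mathcomp Require Import all_boot all_order all_algebra.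
From mathcomp Require Import reals.
From mathcomp.algebra_tactics Require Import ring lra.
From Stdlib Require Import ClassicalEpsilon FunctionalExtensionality.
Set Implicit Arguments. Unset Strict Implicit. Unset Printing Implicit Defensive.
Import Order.TTheory GRing.Theory Num.Theory.
Local Open Scope ring_scope.

(* For closedness, let [sum_i lam_i delta(x n i)]
   converge in the dual norm to [Phi]; we show that [Phi] is again such a sum, by
   induction on the number of nonzero coefficients.  Passing to subsequences:
   - if the points stay uniformly separated from each other and from [z], testing
     against tent ("bump") functions shows that each point is eventually matched
     by points of later terms, so some coordinate is Cauchy, hence converges to
     some [y] by completeness;
   - otherwise some coordinate tends to [z], or two coordinates collide.
   A converging coordinate is dropped (its term converges to [lam_j delta(y)]),
   colliding coordinates are merged; either way the support shrinks. *)

Lemma fchoice (A B : Type) (P : A -> B -> Prop) :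
  (forall a, exists b, P a b) -> exists f : A -> B, forall a, P a (f a).
Proof.
move=> H; exists (fun a => proj1_sig (constructive_indefinite_description _ (H a))).
by move=> a; exact: (proj2_sig (constructive_indefinite_description _ (H a))).
Qed.

Lemma pigeonhole_subseq (T : finType) (f : nat -> T) :
  exists t (s : nat -> nat), forall u, (u <= s u)%N /\ f (s u) = t.
Proof.
have [t Ht] : exists t, forall N, exists m, (N <= m)%N /\ f m = t.
  apply: NNPP => Hnone.
  have Hbound : forall t, exists N, forall m, (N <= m)%N -> f m != t.
    move=> t; apply: NNPP => Ht; apply: Hnone; exists t => N; apply: NNPP => HN.
    apply: Ht; exists N => m Nm; apply/eqP => fm; apply: HN; by exists m.
  have [g Hg] := fchoice Hbound.
  by have := Hg (f (\max_t g t)) (\max_t g t) (leq_bigmax _); rewrite eqxx.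
by have [s Hs] := fchoice Ht; exists t, s.
Qed.

Lemma inv_succ_small (R : realType) (e : R) : 0 < e ->
  exists N, forall m, (N <= m)%N -> (m.+1%:R : R)^-1 < e.
Proof.
move=> he; have h0 : 0 <= e^-1 by rewrite invr_ge0 ltW.
exists (Num.Def.archi_bound e^-1) => m hm.
have h1 := archi_boundP h0.
have h2 : (Num.Def.archi_bound e^-1)%:R <= (m.+1%:R : R).
  by rewrite ler_nat; apply: (leq_trans hm).
rewrite -[e]invrK ltf_pV2 ?posrE ?invr_gt0 ?ltr0n //; lra.
Qed.

Lemma frequently_small_subseq (R : realType) (T : finType) (dist : nat -> T -> R) :
  (forall e, 0 < e -> forall N, exists n t, (N <= n)%N /\ dist n t < e) ->
  exists t (s : nat -> nat), (forall u, (u <= s u)%N) /\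
    forall e, 0 < e -> exists N, forall u, (N <= u)%N -> dist (s u) t < e.
Proof.
move=> Hfreq.
have [nt Hnt] : exists nt : nat -> nat * T, forall m,
    (m <= (nt m).1)%N /\ dist (nt m).1 (nt m).2 < (m.+1%:R)^-1.
  have Hm : forall m, exists p : nat * T,
      (m <= p.1)%N /\ dist p.1 p.2 < (m.+1%:R)^-1.
    move=> m.
    have hpos : 0 < (m.+1%:R : R)^-1 by rewrite invr_gt0 ltr0Sn.
    by have [n [t [hn ht]]] := Hfreq _ hpos m; exists (n, t).
  exact: (fchoice Hm).
have [t [mm Hmm]] := pigeonhole_subseq (fun m => (nt m).2).
exists t, (fun u => (nt (mm u)).1); split.
  by move=> u; exact: leq_trans (Hmm u).1 (Hnt _).1.
move=> e he; have [N HN] := inv_succ_small he; exists N => u hu.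
have [hmm <-] := Hmm u; apply: lt_trans (Hnt _).2 _.
apply: le_lt_trans (HN u hu).
by rewrite lef_pV2 ?posrE ?ltr0n // ler_nat ltnS.
Qed.

(* An elementary estimate behind the bump-function tests: if [a r ~ b (r - dd)]
   and [a (r - dd) ~ b r] up to [eta], with [0 <= dd < r], then [|a| dd <= 2 eta]
   as soon as [2 eta <= |a| r]. *)
Lemma two_point_estimate (R : realType) (a b r dd eta : R) :
  0 < r -> 0 <= dd -> dd < r -> 2 * eta <= `|a| * r ->
  `|a * r - b * (r - dd)| <= eta -> `|a * (r - dd) - b * r| <= eta ->
  `|a| * dd <= 2 * eta.
Proof.
move=> hr hd hdr he h1 h2.
have e1 : (a - b) * (2 * r - dd) = (a * r - b * (r - dd)) + (a * (r - dd) - b * r)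
  by ring.
have e2 : (a + b) * dd = (a * r - b * (r - dd)) - (a * (r - dd) - b * r) by ring.
have k1 : `|(a - b) * (2 * r - dd)| <= 2 * eta.
  by rewrite e1; apply: (le_trans (ler_normD _ _)); lra.
have k2 : `|(a + b) * dd| <= 2 * eta.
  by rewrite e2; apply: (le_trans (ler_normB _ _)); lra.
rewrite normrM (ger0_norm (x := 2 * r - dd)) in k1; last by lra.
rewrite normrM (ger0_norm hd) in k2.
have k3 : `|a - b| * r <= 2 * eta.
  by apply: le_trans k1; apply: ler_wpM2l; [exact: normr_ge0 | lra].
have k4 : `|a - b| <= `|a| by rewrite -(ler_pM2r hr); lra.
have k5 : `|a| <= `|a + b|.
  have : `|(a + b) + (a - b)| <= `|a + b| + `|a - b| by apply: ler_normD.
  have -> : (a + b) + (a - b) = 2 * a by ring.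
  by rewrite normrM ger0_norm; lra.
by apply: le_trans k2; apply: ler_wpM2r.
Qed.

Section SumsOfDeltas.
Variables (R : realType) (M : Type) (d : M -> M -> R) (z : M).
Hypothesis hmet : is_metric d.

Lemma d_ge0 x y : 0 <= d x y. Proof. by case: hmet => + _ _ _; apply. Qed.
Lemma d_xx x : d x x = 0. Proof. by case: hmet => _ + _ _ => /(_ x x) [_ ->]. Qed.
Lemma d_sym x y : d x y = d y x. Proof. by case: hmet => _ _ + _; apply. Qed.
Lemma d_tri x y w : d x w <= d x y + d y w. Proof. by case: hmet => _ _ _; apply. Qed.

Lemma ball_lip g u v : Lip0_ball d z g -> `|g u - g v| <= d u v.
Proof. by case=> _ ->. Qed.

Lemma ball_Lip0 g : Lip0_ball d z g -> Lip0 d z g.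
Proof. by case=> h0 h; split => //; exists 1 => u v; rewrite mul1r. Qed.

Lemma Lip0_lincomb (a b : R) f g : Lip0 d z f -> Lip0 d z g ->
  Lip0 d z (fun x => a * f x + b * g x).
Proof.
case=> f0 [C1 HC1] [g0 [C2 HC2]]; split; first by rewrite f0 g0 !mulr0 addr0.
exists (`|a| * C1 + `|b| * C2) => u v.
have -> : a * f u + b * g u - (a * f v + b * g v) = a * (f u - f v) + b * (g u - g v)
  by ring.
apply: (le_trans (ler_normD _ _)); rewrite !normrM mulrDl -!mulrA.
by apply: lerD; apply: ler_wpM2l.
Qed.

Lemma Lip0_scale_ball f : Lip0 d z f ->
  exists D g, 0 < D /\ Lip0_ball d z g /\ f = (fun x => D * g x).
Proof.
case=> f0 [C HC]; pose D := `|C| + 1.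
have hD : 0 < D by rewrite /D; have := normr_ge0 C; lra.
exists D, (fun x => D^-1 * f x); split=> //; split; last first.
  by apply: functional_extensionality => x; rewrite mulrA mulfV ?gt_eqF // mul1r.
split; first by rewrite f0 mulr0.
move=> v w; rewrite -mulrBr normrM gtr0_norm ?invr_gt0 // ler_pdivrMl //.
apply: (le_trans (HC v w)); apply: ler_wpM2r; first exact: d_ge0.
by rewrite /D; have := ler_norm C; lra.
Qed.

Lemma in_dual_scale Phi (D : R) g : in_dual d z Phi -> Lip0 d z g ->
  Phi (fun x => D * g x) = D * Phi g.
Proof.
case=> lin _ hg.
have -> : (fun x => D * g x) = (fun x => D * g x + 0 * g x).
  by apply: functional_extensionality => x; rewrite mul0r addr0.
by rewrite lin // mul0r addr0.
Qed.

Lemma delta_comb_lincomb k (lam : 'I_k -> R) (xs : 'I_k -> M) (a b : R) f g :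
  delta_comb lam xs (fun x => a * f x + b * g x)
  = a * delta_comb lam xs f + b * delta_comb lam xs g.
Proof.
by rewrite /delta_comb !mulr_sumr -big_split /=; apply: eq_bigr => i _; ring.
Qed.

Lemma delta_comb_bounded k (lam : 'I_k -> R) (xs : 'I_k -> M) f : Lip0_ball d z f ->
  `|delta_comb lam xs f| <= \sum_(i < k) `|lam i| * d (xs i) z.
Proof.
case=> f0 hf; apply: (le_trans (ler_norm_sum _ _ _)); apply: ler_sum => i _.
by rewrite normrM; apply: ler_wpM2l => //; have := hf (xs i) z; rewrite f0 subr0.
Qed.

Lemma sum_delta_in_free_space k (lam : 'I_k -> R) Phi :
  sum_delta_set d z lam Phi -> in_free_space d z Phi.
Proof.
case=> xs Hxs; split; last first.
  move=> e he; exists k, lam, xs => f hf.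
  by rewrite (Hxs f (ball_Lip0 hf)) subrr normr0 ltW.
split.
  move=> a b f g hf hg.
  by rewrite (Hxs _ hf) (Hxs _ hg) (Hxs _ (Lip0_lincomb a b hf hg)) delta_comb_lincomb.
exists (\sum_(i < k) `|lam i| * d (xs i) z) => f hf.
by rewrite (Hxs f (ball_Lip0 hf)); exact: delta_comb_bounded.
Qed.

Lemma sum_delta_of_ball k (lam : 'I_k -> R) Phi (xs : 'I_k -> M) : in_dual d z Phi ->
  (forall g, Lip0_ball d z g -> Phi g = delta_comb lam xs g) ->
  sum_delta_set d z lam Phi.
Proof.
move=> hPhi Hxs; exists xs => f /Lip0_scale_ball [D [g [_ [hg ->]]]].
rewrite (in_dual_scale _ hPhi (ball_Lip0 hg)) Hxs //.
by rewrite /delta_comb mulr_sumr; apply: eq_bigr => i _; ring.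
Qed.

(* A real sequence is eventually below every positive bound; for the nonnegative
   sequences of distances used below, this says that it tends to 0. *)
Definition vanishes (u : nat -> R) : Prop :=
  forall e, 0 < e -> exists N, forall n, (N <= n)%N -> u n < e.

Variable k : nat.
Implicit Types (lam : 'I_k -> R) (xs : 'I_k -> M) (x : nat -> 'I_k -> M).

Definition comb_limit lam x (Phi : functional R M) : Prop :=
  forall e, 0 < e -> exists N, forall n, (N <= n)%N ->
    dual_dist_le d z (delta_comb lam (x n)) Phi e.

Definition ball_repr lam (Phi : functional R M) : Prop :=
  exists xs, forall g, Lip0_ball d z g -> Phi g = delta_comb lam xs g.

Definition closed_at lam : Prop :=
  forall x Phi, comb_limit lam x Phi -> ball_repr lam Phi.

Definition support_size lam : nat := #|[set i | lam i != 0]|.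

Definition drop_coef lam j : 'I_k -> R := fun l => if l == j then 0 else lam l.
Definition merge_coef lam i j : 'I_k -> R :=
  fun l => if l == i then 0 else if l == j then lam i + lam j else lam l.

Definition update xs j (y : M) : 'I_k -> M := fun l => if l == j then y else xs l.

Lemma comb_ext lam xs xs' g : (forall l, lam l = 0 \/ xs l = xs' l) ->
  delta_comb lam xs g = delta_comb lam xs' g.
Proof. by move=> H; apply: eq_bigr => l _; case: (H l) => ->; rewrite ?mul0r. Qed.

Lemma comb_drop lam xs g j :
  delta_comb (drop_coef lam j) xs g = delta_comb lam xs g - lam j * g (xs j).
Proof.
rewrite /delta_comb (bigD1 j) //= [in RHS](bigD1 j) //= /drop_coef eqxx mul0r add0r.
by rewrite (eq_bigr (fun l => lam l * g (xs l))) => [|l /negbTE ->]; first ring.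
Qed.

Lemma comb_merge lam xs g i j : i != j ->
  delta_comb (merge_coef lam i j) xs g
  = delta_comb lam xs g - lam i * (g (xs i) - g (xs j)).
Proof.
move=> ij; have ji : j != i by rewrite eq_sym.
rewrite /delta_comb [in LHS](bigD1 i) //= [in LHS](bigD1 j) //=.
rewrite [in RHS](bigD1 i) //= [in RHS](bigD1 j) //=.
rewrite /merge_coef eqxx (negbTE ji) eqxx.
rewrite (eq_bigr (fun l => lam l * g (xs l))); first ring.
by move=> l /andP[li lj]; rewrite (negbTE li) (negbTE lj).
Qed.

Lemma support_size_lt lam lam' i :
  lam i != 0 -> lam' i = 0 -> (forall l, lam' l != 0 -> lam l != 0) ->
  (support_size lam' < support_size lam)%N.
Proof.
move=> h1 h2 h3; apply: proper_card; apply/properP; split.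
  by apply/subsetP => l; rewrite !inE; apply: h3.
by exists i; rewrite !inE ?h1 ?h2 ?eqxx.
Qed.

Lemma support_drop_lt lam j : lam j != 0 ->
  (support_size (drop_coef lam j) < support_size lam)%N.
Proof.
move=> hj; apply: (support_size_lt hj); first by rewrite /drop_coef eqxx.
by move=> l; rewrite /drop_coef; case: ifP => // _; rewrite eqxx.
Qed.

Lemma support_merge_lt lam i j : lam i != 0 -> lam j != 0 ->
  (support_size (merge_coef lam i j) < support_size lam)%N.
Proof.
move=> hi hj; apply: (support_size_lt hi); first by rewrite /merge_coef eqxx.
move=> l; rewrite /merge_coef; case: ifP => _; first by rewrite eqxx.
by case: ifP => // /eqP ->.
Qed.

Lemma comb_limit_subseq lam x Phi (s : nat -> nat) : (forall n, (n <= s n)%N) ->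
  comb_limit lam x Phi -> comb_limit lam (fun n => x (s n)) Phi.
Proof.
move=> hs hc e he; have [N HN] := hc e he.
by exists N => n hn; apply: HN; exact: leq_trans hn (hs n).
Qed.

Lemma comb_limit_perturb lam lam' x Phi Phi' (c : R) (a b : nat -> M) :
  comb_limit lam x Phi -> vanishes (fun n => d (a n) (b n)) ->
  (forall n g, delta_comb lam' (x n) g - Phi' g
     = delta_comb lam (x n) g - Phi g - c * (g (a n) - g (b n))) ->
  comb_limit lam' x Phi'.
Proof.
move=> hc hab E e he.
have hc1 : 0 < `|c| + 1 by have := normr_ge0 c; lra.
have [N1 H1] := hc (e / 2) ltac:(lra).
have [N2 H2] := hab (e / (2 * (`|c| + 1))) ltac:(rewrite divr_gt0 //; lra).
exists (maxn N1 N2) => n; rewrite geq_max => /andP[hn1 hn2] g hg.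
have hcd : `|c * (g (a n) - g (b n))| <= `|c| * d (a n) (b n).
  by rewrite normrM ler_wpM2l // ball_lip.
have hcd2 : `|c| * d (a n) (b n) <= e / 2.
  have hcc : `|c| <= `|c| + 1 by lra.
  apply: le_trans (ler_wpM2r (d_ge0 _ _) hcc) _.
  apply: le_trans (ler_wpM2l (ltW hc1) (ltW (H2 n hn2))) _.
  suff -> : (`|c| + 1) * (e / (2 * (`|c| + 1))) = e / 2 by [].
  by field; rewrite gt_eqF.
rewrite E; apply: le_trans (ler_normB _ _) _.
by rewrite [e]splitr; apply: lerD (H1 n hn1 g hg) (le_trans hcd hcd2).
Qed.

Lemma comb_limit_cauchy lam x Phi : comb_limit lam x Phi ->
  forall e, 0 < e -> exists N, forall n m, (N <= n)%N -> (N <= m)%N ->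
    dual_dist_le d z (delta_comb lam (x n)) (delta_comb lam (x m)) (2 * e).
Proof.
move=> hc e he; have [N HN] := hc e he; exists N => n m hn hm g hg.
have := ler_normB (delta_comb lam (x n) g - Phi g) (delta_comb lam (x m) g - Phi g).
have := HN n hn g hg; have := HN m hm g hg.
have -> : delta_comb lam (x n) g - Phi g - (delta_comb lam (x m) g - Phi g)
  = delta_comb lam (x n) g - delta_comb lam (x m) g by ring.
lra.
Qed.

Lemma closed_at_zero lam : (forall i, lam i = 0) -> closed_at lam.
Proof.
move=> h0 x Phi hc; exists (fun _ => z) => g hg.
have E xs : delta_comb lam xs g = 0.
  by rewrite /delta_comb big1 // => i _; rewrite h0 mul0r.
rewrite E; apply/eqP; apply: contraT => hne.
have hp : 0 < `|Phi g| / 2 by rewrite divr_gt0 ?normr_gt0.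
have [N HN] := hc _ hp; have := HN N (leqnn _) g hg.
by rewrite E sub0r normrN; lra.
Qed.

(* Reduction 1: if the [j]-th points converge to [y], then the limit is
   [lam_j delta(y)] plus a limit of combinations with [j] dropped. *)
Lemma closed_by_limit lam x Phi j y : closed_at (drop_coef lam j) ->
  comb_limit lam x Phi -> vanishes (fun n => d (x n j) y) -> ball_repr lam Phi.
Proof.
move=> hdrop hc hy.
have hc' : comb_limit (drop_coef lam j) x (fun g => Phi g - lam j * g y).
  apply: (comb_limit_perturb (c := lam j) hc hy) => n g; rewrite comb_drop; ring.
have [xs Hxs] := hdrop _ _ hc'; exists (update xs j y) => g hg.
have E : delta_comb (drop_coef lam j) xs g
    = delta_comb (drop_coef lam j) (update xs j y) g.
  by apply: comb_ext => l; rewrite /drop_coef /update; case: (l == j); [left|right].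
have := Hxs g hg; rewrite E comb_drop /update eqxx.
by move/(congr1 (fun t => t + lam j * g y)); rewrite !subrK.
Qed.

(* Reduction 2: if the [i]-th and [j]-th points collide, then the limit is a
   limit of combinations with [i] merged into [j]. *)
Lemma closed_by_collision lam x Phi i j : i != j -> closed_at (merge_coef lam i j) ->
  comb_limit lam x Phi -> vanishes (fun n => d (x n i) (x n j)) -> ball_repr lam Phi.
Proof.
move=> ij hmerge hc hij.
have hc' : comb_limit (merge_coef lam i j) x Phi.
  apply: (comb_limit_perturb (c := lam i) hc hij) => n g; rewrite comb_merge //; ring.
have [xs Hxs] := hmerge _ _ hc'; exists (update xs i (xs j)) => g hg.
have E : delta_comb (merge_coef lam i j) xs g
    = delta_comb (merge_coef lam i j) (update xs i (xs j)) g.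
  by apply: comb_ext => l; rewrite /merge_coef /update; case: (l == i); [left|right].
by rewrite Hxs // E comb_merge // /update eqxx if_same subrr mulr0 subr0.
Qed.

Definition bump (p : M) (r : R) : M -> R :=
  fun u => if d u p < r then r - d u p else 0.

Lemma bump_ball p r : r <= d z p -> Lip0_ball d z (bump p r).
Proof.
move=> hz; split; first by rewrite /bump ltNge hz.
move=> u v; rewrite /bump.
have h1 := d_tri u v p; have h2 := d_tri v u p; have h3 := d_sym u v.
by case: ifP => hu; case: ifP => hv; rewrite ler_norml; apply/andP; split; lra.
Qed.

(* Points of [xs] with nonzero coefficient are at least [eps] away from the base
   point and from each other. *)
Definition pair_gap xs i j : R := if i == j then d (xs i) z else d (xs i) (xs j).
Definition separated lam xs (eps : R) : Prop :=
  forall i j, lam i != 0 -> lam j != 0 -> eps <= pair_gap xs i j.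

Lemma separated_base lam xs eps i : separated lam xs eps -> lam i != 0 ->
  eps <= d (xs i) z.
Proof. by move=> hsep hi; have := hsep i i hi hi; rewrite /pair_gap eqxx. Qed.

Lemma separated_far lam xs eps p i j : separated lam xs eps ->
  i != j -> lam i != 0 -> lam j != 0 -> d (xs j) p < eps / 2 -> eps / 2 <= d (xs i) p.
Proof.
move=> hsep ij hi hj hjp; have := hsep i j hi hj; rewrite /pair_gap (negbTE ij).
have := d_tri (xs i) p (xs j); rewrite (d_sym p); lra.
Qed.

Lemma comb_bump lam xs eps p j : separated lam xs eps -> lam j != 0 ->
  d (xs j) p < eps / 2 ->
  delta_comb lam xs (bump p (eps / 2)) = lam j * (eps / 2 - d (xs j) p).
Proof.
move=> hsep hj hjp; rewrite /delta_comb (bigD1 j) //= {1}/bump hjp big1 ?addr0 //.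
move=> i ij; case: (eqVneq (lam i) 0) => [->|hi]; first by rewrite mul0r.
by rewrite /bump ltNge (separated_far hsep ij hi hj hjp) mulr0.
Qed.

Lemma comb_bump_empty lam xs eps p :
  (forall i, lam i != 0 -> eps / 2 <= d (xs i) p) ->
  delta_comb lam xs (bump p (eps / 2)) = 0.
Proof.
move=> hfar; rewrite /delta_comb big1 // => i _.
case: (eqVneq (lam i) 0) => [->|hi]; first by rewrite mul0r.
by rewrite /bump ltNge hfar ?mulr0.
Qed.

Lemma matching_point lam w w' eps eta j : 0 < eps ->
  separated lam w eps -> separated lam w' eps ->
  dual_dist_le d z (delta_comb lam w) (delta_comb lam w') eta ->
  lam j != 0 -> eta < `|lam j| * (eps / 2) ->
  exists j', lam j' != 0 /\ d (w j) (w' j') < eps / 2.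
Proof.
move=> he hs hs' hclose hj heta; apply: NNPP => Hnone.
have hb : Lip0_ball d z (bump (w j) (eps / 2)).
  by apply: bump_ball; rewrite d_sym; have := separated_base hs hj; lra.
have := hclose _ hb.
rewrite (comb_bump hs hj) ?d_xx; last lra.
rewrite comb_bump_empty => [|i hi]; last first.
  by rewrite d_sym leNgt; apply/negP => hlt; apply: Hnone; exists i.
by rewrite subr0 subr0 normrM (gtr0_norm (x := eps / 2)); lra.
Qed.

Lemma matched_dist lam w w' eps eta j j' : 0 < eps ->
  separated lam w eps -> separated lam w' eps ->
  dual_dist_le d z (delta_comb lam w) (delta_comb lam w') eta ->
  lam j != 0 -> lam j' != 0 -> d (w j) (w' j') < eps / 2 ->
  2 * eta <= `|lam j| * (eps / 2) ->
  `|lam j| * d (w j) (w' j') <= 2 * eta.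
Proof.
move=> he hs hs' hclose hj hj' hd heta.
have hd' : d (w' j') (w j) < eps / 2 by rewrite d_sym.
have hb1 : Lip0_ball d z (bump (w j) (eps / 2)).
  by apply: bump_ball; rewrite d_sym; have := separated_base hs hj; lra.
have hb2 : Lip0_ball d z (bump (w' j') (eps / 2)).
  by apply: bump_ball; rewrite d_sym; have := separated_base hs' hj'; lra.
have h1 := hclose _ hb1; have h2 := hclose _ hb2.
rewrite (comb_bump hs hj) ?d_xx ?(comb_bump hs' hj') // in h1; last lra.
rewrite (comb_bump hs hj) ?(comb_bump hs' hj') ?d_xx // in h2; last lra.
rewrite subr0 d_sym in h1; rewrite subr0 in h2.
by apply: (@two_point_estimate _ _ (lam j') (eps / 2)) => //; [lra | exact: d_ge0].
Qed.

Lemma anchor_subseq lam x Phi eps i0 : 0 < eps ->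
  (forall n, separated lam (x n) eps) -> comb_limit lam x Phi -> lam i0 != 0 ->
  exists p j (s : nat -> nat), [/\ lam j != 0, forall u, (u <= s u)%N &
    forall u, d p (x (s u) j) <= eps / 8].
Proof.
move=> he hsep hc hi0.
have c0 : 0 < `|lam i0| by rewrite normr_gt0.
pose e0 := `|lam i0| * eps / 32.
have c0e := mulr_gt0 c0 he.
have he0 : 0 < e0 by rewrite /e0; lra.
have [N1 HN1] := comb_limit_cauchy hc he0.
have hmatch m : exists j', lam j' != 0 /\ d (x N1 i0) (x (m + N1)%N j') <= eps / 8.
  have hclose := HN1 N1 (m + N1)%N (leqnn _) (leq_addl _ _).
  have [j' [hj' hd]] := matching_point he (hsep _) (hsep _) hclose hi0
    ltac:(rewrite /e0; lra).
  exists j'; split => //.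
  have := matched_dist he (hsep _) (hsep _) hclose hi0 hj' hd ltac:(rewrite /e0; lra).
  by move=> hb; rewrite -(ler_pM2l c0); rewrite /e0 in hb; lra.
have [f Hf] := fchoice hmatch.
have [j [s Hs]] := pigeonhole_subseq f.
exists (x N1 i0), j, (fun u => s u + N1)%N; split.
- by have [_ <-] := Hs 0%N; exact: (Hf _).1.
- by move=> u; exact: leq_trans (Hs u).1 (leq_addr _ _).
- by move=> u; have [_ <-] := Hs u; exact: (Hf _).2.
Qed.

(* A coordinate that stays within [eps/8] of a fixed point in a separated
   convergent sequence is Cauchy: the bump tests pin it down. *)
Lemma separated_cauchy lam x Phi eps j p : 0 < eps ->
  (forall n, separated lam (x n) eps) -> comb_limit lam x Phi -> lam j != 0 ->
  (forall n, d p (x n j) <= eps / 8) ->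
  forall e, 0 < e -> exists N, forall m n, (N <= m)%N -> (N <= n)%N ->
    d (x m j) (x n j) < e.
Proof.
move=> he hsep hc hj hp e he'.
have c1 : 0 < `|lam j| by rewrite normr_gt0.
pose e1 := Num.min (`|lam j| * eps / 32) (`|lam j| * e / 8).
have k1 : e1 <= `|lam j| * eps / 32 by rewrite /e1 ge_min lexx.
have k2 : e1 <= `|lam j| * e / 8 by rewrite /e1 ge_min lexx orbT.
have he1 : 0 < e1.
  rewrite /e1 lt_min; have := mulr_gt0 c1 he; have := mulr_gt0 c1 he'.
  by move=> h1 h2; apply/andP; split; lra.
have [N HN] := comb_limit_cauchy hc he1; exists N => m n hm hn.
have hd : d (x m j) (x n j) < eps / 2.
  have := d_tri (x m j) p (x n j); rewrite (d_sym (x m j) p).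
  by have := hp m; have := hp n; lra.
have := matched_dist he (hsep m) (hsep n) (HN m n hm hn) hj hj hd ltac:(lra).
by move=> hb; rewrite -(ltr_pM2l c1); lra.
Qed.

Definition eventually_separated lam x : Prop :=
  exists eps N, 0 < eps /\ forall n, (N <= n)%N -> separated lam (x n) eps.

(* If the sequence does not stay separated, then along a subsequence either a
   point tends to the base point ([i = j]) or two points collide ([i != j]). *)
Lemma collapse_subseq lam x : ~ eventually_separated lam x ->
  exists i j (s : nat -> nat), [/\ lam i != 0, lam j != 0, forall u, (u <= s u)%N &
    vanishes (fun u => pair_gap (x (s u)) i j)].
Proof.
move=> hnsep.
pose T := {p : 'I_k * 'I_k | (lam p.1 != 0) && (lam p.2 != 0)}.
pose gap n (p : T) := pair_gap (x n) (val p).1 (val p).2.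
have hfreq : forall e, 0 < e -> forall N, exists n (p : T), (N <= n)%N /\ gap n p < e.
  move=> e he N; apply: NNPP => Hnone; apply: hnsep; exists e, N; split => // n hn.
  move=> i j hi hj; rewrite leNgt; apply/negP => hlt; apply: Hnone.
  by exists n, (exist _ (i, j) (introT andP (conj hi hj))).
have [[[i j] hij] [s [hs hvan]]] := frequently_small_subseq hfreq.
by case/andP: (hij) => hi hj; exists i, j, s.
Qed.

Hypothesis hcomp : metric_complete d.

Lemma converging_coord lam x Phi i0 : eventually_separated lam x ->
  comb_limit lam x Phi -> lam i0 != 0 ->
  exists j (s : nat -> nat) y, [/\ lam j != 0, forall u, (u <= s u)%N &
    vanishes (fun u => d (x (s u) j) y)].
Proof.
move=> [eps [N [he hsep]]] hc hi0.
have hsepN n : separated lam (x (n + N)%N) eps by apply: hsep; exact: leq_addl.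
have hcN := comb_limit_subseq (fun n => leq_addr N n) hc.
have [p [j [s [hj hs hp]]]] := anchor_subseq he hsepN hcN hi0.
have hcs := comb_limit_subseq hs hcN.
have [y hy] := hcomp (separated_cauchy he (fun u => hsepN (s u)) hcs hj hp).
exists j, (fun u => s u + N)%N, y; split => //.
by move=> u; exact: leq_trans (hs u) (leq_addr _ _).
Qed.

Lemma closed_step lam :
  (forall lam', (support_size lam' < support_size lam)%N -> closed_at lam') ->
  closed_at lam.
Proof.
move=> IH x Phi hc.
case: (classic (exists i0, lam i0 != 0)) => [[i0 hi0]|hzero]; last first.
  apply: closed_at_zero hc => i; apply/eqP; apply: contraT => hi.
  by case: hzero; exists i.
case: (classic (eventually_separated lam x)) => [hsep|hnsep].
  have [j [s [y [hj hs hy]]]] := converging_coord hsep hc hi0.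
  exact: closed_by_limit (IH _ (support_drop_lt hj)) (comb_limit_subseq hs hc) hy.
have [i [j [s [hi hj hs hvan]]]] := collapse_subseq hnsep.
have hcs := comb_limit_subseq hs hc.
rewrite /pair_gap in hvan; case: (eqVneq i j) hvan => [_|ij] hvan.
  exact: closed_by_limit (IH _ (support_drop_lt hi)) hcs hvan.
exact: closed_by_collision ij (IH _ (support_merge_lt hi hj)) hcs hvan.
Qed.

Lemma closed_at_all lam : closed_at lam.
Proof.
suff main n : forall lam, (support_size lam <= n)%N -> closed_at lam.
  exact: main _ _ (leqnn _).
elim: n => [|n IHn] lam' hn; apply: closed_step => lam'' hlt.
  by move: (leq_trans hlt hn).
by apply: IHn; rewrite -ltnS (leq_trans hlt hn).
Qed.

End SumsOfDeltas.

Theorem lemma3p16 (R : realType) (M : Type) (d : M -> M -> R) (z : M)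
  (hmet : is_metric d) (hcomp : metric_complete d)
  (k : nat) (lam : 'I_k -> R) :
  norm_closed_subset_of_F d z (sum_delta_set d z lam).
Proof.
split; first by move=> Phi; exact: sum_delta_in_free_space.
move=> u Phi hu hF hconv.
have [x Hx] := fchoice hu.
have hc : comb_limit d z lam x Phi.
  move=> e he; have [N HN] := hconv e he; exists N => n hn g hg.
  by rewrite -(Hx n g (ball_Lip0 hg)); exact: HN n hn g hg.
have [ys Hys] := closed_at_all hmet hcomp hc.
exact: (sum_delta_of_ball hmet hF.1 Hys).
Qed.
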